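(* Let $(\Omega,\Sigma,\mu)$ be an admissible measure space and let $E\in\mathcal{J}_0(\mu)$. Then (1) $(E_0)''\subset^1E''$; (2) $E''\subset^1((E')_0)'$; (3) $(((E_0)')_0)'\subset^1((E')_0)'$; (4) $(E_0)''\subset^1(((E_0)')_0)'$.
   Context: $L_0(\mu)$: classes of measurable real functions ordered a.e. Admissible measure space: $\mu$ complete; a set whose intersection with every finite-measure measurable set is measurable is itself measurable; $\mu$ semifinite; $\mu$ has the direct sum property. A Banach ideal space (BIS) is a vector subspace $E\subset L_0(\mu)$ with complete norm such that $y\in E$, $|x|\le|y|$ a.e. imply $x\in E$, $\|x\|_E\le\|y\|_E$; maximal width: the only $z\in L_0(\mu)$ with $zy=0$ for all $y\in E$ is $z=0$. $E\subset^1F$: $E\subseteq F$ and $\|x\|_F\le\|x\|_E$ for $x\in E$. The dual $E'$ is the set of $f\in L_0(\mu)$ with $\|f\|_{E'}=\sup\{\int_\Omega fx\,d\mu:\|x\|_E=1\}<\infty$, with this norm. An element $x\in E$ has order continuous norm if whenever $(x_i)_{i\in I}$ is a net indexed by a directed set with $|x|\ge x_i$, $x_i$ decreasing and $\inf_i x_i=0$, then $\lim_i\|x_i\|_E=0$; $E_0$ is the set of such elements with the norm of $E$. A subset $F\subset E$ is a foundation in $E$ if it is an ideal in $E$ ($x\in F$, $y\in E$, $|y|\le|x|$ imply $y\in F$) and has maximal width. $\mathcal{J}_0(\mu)$ is the set of BIS $E$ (of maximal width) such that $E_0$ is a foundation in $E$ and $(E')_0$ is a foundation in $E'$. *)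

From HB Require Import structures.
From mathcomp Require Import all_boot all_order all_algebra.
From mathcomp Require Import all_classical all_reals all_analysis.
Set Implicit Arguments. Unset Strict Implicit. Unset Printing Implicit Defensive.
Import Order.TTheory GRing.Theory Num.Theory.
Import numFieldNormedType.Exports.
Local Open Scope classical_set_scope.
Local Open Scope ring_scope.

Section defs.
Context {d : measure_display} {T : measurableType d} {R : realType}.
Variable mu : {measure set T -> \bar R}.

Definition mu_complete : Prop :=
  forall A : set T, mu.-negligible A -> measurable A.

Definition mu_locally_determined : Prop :=
  forall A : set T,
    (forall B : set T, measurable B -> (mu B < +oo)%E -> measurable (A `&` B)) ->
    measurable A.

Definition mu_semifinite : Prop :=
  forall A : set T, measurable A -> mu A = +oo%E ->
    exists B : set T, [/\ measurable B, B `<=` A, (0 < mu B)%E & (mu B < +oo)%E].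

Definition mu_direct_sum : Prop :=
  exists (I : choiceType) (O : I -> set T),
    [/\ forall i, measurable (O i) /\ (mu (O i) < +oo)%E,
        forall i j, i <> j -> O i `&` O j = set0,
        \bigcup_i O i = setT,
        forall A : set T, (forall i, measurable (A `&` O i)) -> measurable A &
        forall A : set T, measurable A -> mu A = esum setT (fun i => mu (A `&` O i))].

Definition admissible : Prop :=
  [/\ mu_complete, mu_locally_determined, mu_semifinite & mu_direct_sum].

(* ---------- function spaces: elements of L_0(mu) are represented by
   measurable functions T -> R, all relations being taken a.e. ---------- *)
Record fspace := FSpace { fmem : (T -> R) -> Prop ; fnorm : (T -> R) -> R }.

Definition L0 (x : T -> R) : Prop := measurable_fun setT x.

Definition ae_le (x y : T -> R) : Prop := {ae mu, forall t, x t <= y t}.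
Definition ae_eq0 (x : T -> R) : Prop := {ae mu, forall t, x t = 0}.

Definition maximal_width (F : (T -> R) -> Prop) : Prop :=
  forall z, L0 z -> (forall y, F y -> ae_eq0 (fun t => z t * y t)) -> ae_eq0 z.

(* Banach ideal space (of maximal width, as in the paper's convention) *)
Definition is_BIS (E : fspace) : Prop :=
  [/\ (forall x, fmem E x -> L0 x),
      maximal_width (fmem E) &
    [/\
      [/\ fmem E (fun=> 0),
          (forall x y, fmem E x -> fmem E y -> fmem E (fun t => x t + y t)) &
          (forall (a : R) x, fmem E x -> fmem E (fun t => a * x t))],
      [/\ (forall x y, fmem E x -> fmem E y ->
             fnorm E (fun t => x t + y t) <= fnorm E x + fnorm E y),
          (forall (a : R) x, fmem E x -> fnorm E (fun t => a * x t) = `|a| * fnorm E x) &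
          (forall x, fmem E x -> fnorm E x = 0 -> ae_eq0 x)],
      (forall u : nat -> T -> R, (forall n, fmem E (u n)) ->
         (forall e : R, 0 < e -> exists N, forall n m, (N <= n)%N -> (N <= m)%N ->
            fnorm E (fun t => u n t - u m t) < e) ->
         exists v, fmem E v /\ forall e : R, 0 < e -> exists N, forall n, (N <= n)%N ->
            fnorm E (fun t => u n t - v t) < e) &
      (forall x y, fmem E y -> L0 x -> ae_le (fun t => `|x t|) (fun t => `|y t|) ->
         fmem E x /\ fnorm E x <= fnorm E y)]].

Definition sub1 (E F : fspace) : Prop :=
  forall x, fmem E x -> fmem F x /\ fnorm F x <= fnorm E x.

Definition dual_vals (E : fspace) (f : T -> R) : set R :=
  [set r | exists x, [/\ fmem E x, fnorm E x = 1 &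
                          r = Rintegral mu setT (fun t => f t * x t)]].

Definition dual (E : fspace) : fspace :=
  FSpace (fun f => [/\ L0 f,
                      (forall x, fmem E x -> mu.-integrable setT (fun t => (f t * x t)%:E)) &
                      has_ubound (dual_vals E f)])
         (fun f => sup (dual_vals E f)).

Definition oc_elem (E : fspace) (x : T -> R) : Prop :=
  forall (I : Type) (le : I -> I -> Prop) (xs : I -> T -> R),
    inhabited I ->
    (forall i, le i i) ->
    (forall i j k, le i j -> le j k -> le i k) ->
    (forall i j, exists k, le i k /\ le j k) ->
    (forall i, fmem E (xs i)) ->
    (forall i, ae_le (xs i) (fun t => `|x t|)) ->
    (forall i j, le i j -> ae_le (xs j) (xs i)) ->
    (* inf_i xs i = 0 in L_0(mu) *)
    (forall i, ae_le (fun=> 0) (xs i)) ->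
    (forall z, L0 z -> (forall i, ae_le z (xs i)) -> ae_le z (fun=> 0)) ->
    forall e : R, 0 < e -> exists i0, forall i, le i0 i -> fnorm E (xs i) < e.

Definition ocpart (E : fspace) : fspace :=
  FSpace (fun x => fmem E x /\ oc_elem E x) (fnorm E).

Definition foundation (F E : fspace) : Prop :=
  [/\ (forall x, fmem F x -> fmem E x),
      (forall x y, fmem F x -> fmem E y ->
          ae_le (fun t => `|y t|) (fun t => `|x t|) -> fmem F y) &
      maximal_width (fmem F)].

Definition in_J0 (E : fspace) : Prop :=
  [/\ is_BIS E, foundation (ocpart E) E & foundation (ocpart (dual E)) (dual E)].

End defs.

From Pilot Require Import Defs.
From HB Require Import structures.
From mathcomp Require Import all_boot all_order all_algebra.
From mathcomp Require Import all_classical all_reals all_analysis.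
From mathcomp Require Import lra measurable_realfun.
Set Implicit Arguments. Unset Strict Implicit. Unset Printing Implicit Defensive.
Import Order.TTheory GRing.Theory Num.Theory.
Import numFieldNormedType.Exports.
Local Open Scope classical_set_scope.
Local Open Scope ring_scope.

(* If E_0 is a foundation of E and mu is semifinite, then (E_0)' = E' with equal
   norms.  Let g be in (E_0)'.  An exhaustion argument covers every set B of finite
   measure, up to a null set, by the supports of countably many y_k in E_0; the
   functions min(|x|, n (|y_0| + ... + |y_(n-1)|)) lie in E_0 and increase to |x|
   on this cover, so monotone convergence gives int_B |g x| <= ||g|| ||x||.  A level
   set {|g x| >= 1/n} of infinite measure would, by semifiniteness, contain subsets
   of finite but arbitrarily large measure, so all level sets have finite measure
   and the bound extends to the whole space.  Hence (1) and (3) are equalities, and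
   (2) and (4) hold because restricting the Koethe duality to a subspace carrying
   the same norm can only enlarge the dual and decrease its norm. *)

Section exhaustion_semifinite.
Context {d : measure_display} {T : measurableType d} {R : realType}.
Variable mu : {measure set T -> \bar R}.
Local Open Scope ereal_scope.

Lemma measure_exhaustion (S : set (set T)) (M : R) :
  (forall A, S A -> measurable A) -> S set0 ->
  (forall A B, S A -> S B -> S (A `|` B)) ->
  (forall A, S A -> mu A <= M%:E) ->
  exists U : (set T)^nat, [/\ forall n, S (U n), nondecreasing_seq U &
    forall A, S A -> mu (A `\` \bigcup_n U n) = 0].
Proof.
move=> mS S0 SU SM; set s : \bar R := ereal_sup [set mu A | A in S].
have s_ge0 : 0 <= s by apply: ereal_sup_ubound; exists set0; rewrite ?measure0.
have sM : s <= M%:E by apply: ge_ereal_sup => _ [A SA <-]; exact: SM.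
have sfin : s \is a fin_num by rewrite ge0_fin_numE // (le_lt_trans sM) ?ltry.
have near_s n : exists B, S B /\ s - (n.+1%:R^-1)%:E < mu B.
  have n_gt0 : (0 < n.+1%:R^-1 :> R)%R by rewrite invr_gt0.
  by have [_ [B SB <-] ?] := ub_ereal_sup_adherent n_gt0 sfin; exists B.
have [A SA] := choice near_s.
(* A set of S with positive measure outside every U n could be added to a U n
   of measure close to s, exceeding s. *)
pose U n := \big[setU/set0]_(k < n.+1) A k.
have SUn n : S (U n).
  rewrite /U; elim: n => [|n ih]; rewrite big_ord_recr /=.
    by rewrite big_ord0 set0U; exact: (SA 0%N).1.
  by apply: SU => //; exact: (SA n.+1).1.
exists U; split => //.
  by move=> m n mn; rewrite subsetEset; apply: subset_bigsetU.
move=> B SB; set V := \bigcup_n U n.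
have mUn n : measurable (U n) by exact: mS.
have mBV : measurable (B `\` V) by apply: measurableD (mS _ SB) (bigcup_measurable _).
have fin X : S X -> mu X \is a fin_num.
  by move=> SX; rewrite ge0_fin_numE // (le_lt_trans (SM _ SX)) ?ltry.
have BVfin : mu (B `\` V) \is a fin_num.
  rewrite ge0_fin_numE // (le_lt_trans _ (ltry (fine (mu B)))) //.
  by rewrite fineK ?fin // le_measure ?inE //; exact: mS.
apply/eqP; rewrite eq_le measure_ge0 andbT leNgt -(fineK BVfin) lte_fin.
apply/negP => /ltr_add_invr[n]; rewrite add0r => ltn.
have UnV : U n `<=` V by move=> t Ut; exists n.
have : mu (U n) + mu (B `\` V) <= s.
  rewrite -measureU //; last by apply/seteqP; split=> // t [/UnV ? []].
  apply: le_trans (ereal_sup_ubound _); last by exists (U n `|` B) => //; exact: SU.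
  by apply: le_measure; rewrite ?inE //; [exact: measurableU|apply: mS; exact: SU|exact: setUS].
have : s - (n.+1%:R^-1)%:E < mu (U n).
  apply: lt_le_trans (SA n).2 _; apply: le_measure; rewrite ?inE //; first exact: mS (SA n).1.
  exact: bigsetU_sup.
rewrite -(fineK sfin) -(fineK (fin _ (SUn n))) -(fineK BVfin).
rewrite -EFinN -!EFinD lte_fin lee_fin; move: ltn.
by move: (n.+1%:R^-1)%R => e; lra.
Qed.

Lemma semifinite_measure_unbounded : mu_semifinite mu ->
  forall L, measurable L -> mu L = +oo -> forall M : R,
  exists A, [/\ measurable A, A `<=` L, mu A < +oo & M%:E < mu A].
Proof.
move=> hsf L mL Loo M; apply: contrapT => noA.
pose S := [set A | [/\ measurable A, A `<=` L & mu A < +oo]].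
have SM A : S A -> mu A <= M%:E.
  by case=> mA AL Afin; rewrite leNgt; apply/negP => MA; apply: noA; exists A.
have [|||U [SU ndU nullU]] := @measure_exhaustion S M _ _ _ SM.
- by move=> A [].
- by split; rewrite ?measure0.
- move=> A B [mA AL Afin] [mB BL Bfin]; split; first exact: measurableU.
    by move=> t [/AL|/BL].
  exact: le_lt_trans (measureU2 mu mA mB) (lte_add_pinfty Afin Bfin).
set V := \bigcup_n U n.
have mU n : measurable (U n) by case: (SU n).
have mV : measurable V by exact: bigcup_measurable.
have VM : mu V <= M%:E.
  have cvV := nondecreasing_cvg_mu (mu:=mu) mU mV ndU.
  rewrite -(cvg_lim _ cvV) //; apply: lime_le; first by apply/cvg_ex; exists (mu V).
  by apply: nearW => n; exact: SM.
have LVoo : mu (L `\` V) = +oo.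
  apply/eqP; rewrite eq_le leey /= leNgt; apply/negP => LVfin.
  have : mu (L `\` V) + mu (L `&` V) < +oo.
    apply: lte_add_pinfty LVfin (le_lt_trans (le_measure _ _ _ (@subIsetr _ L V)) _).
    - by rewrite inE; exact: measurableI.
    - by rewrite inE.
    - exact: le_lt_trans VM (ltry M).
  by rewrite -(measureDI mu mL mV) [X in X < _]Loo ltxx.
have [A [mA ALV Apos Afin]] := hsf _ (measurableD mL mV) LVoo.
have SA : S A by split => // t /ALV [].
have := nullU A SA; rewrite setDidl; last by apply/disjoints_subset => t /ALV [].
by move/eqP; rewrite gt_eqF.
Qed.

Lemma ge0_integral_le_nondecreasing_bound (D : set T) (h : T -> \bar R)
    (f : (T -> \bar R)^nat) (M : \bar R) :
  measurable D -> measurable_fun D h -> (forall t, D t -> 0 <= h t) ->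
  (forall n, measurable_fun D (f n)) -> (forall n t, D t -> 0 <= f n t) ->
  (forall t, D t -> nondecreasing_seq (f^~ t)) ->
  (forall t, D t -> exists n, h t <= f n t) ->
  (forall n, \int[mu]_(t in D) f n t <= M) ->
  \int[mu]_(t in D) h t <= M.
Proof.
move=> mD mh h0 mf f0 ndf hf fM.
have cvf t : D t -> f^~ t @ \oo --> limn (f^~ t).
  by move=> Dt; exact: ereal_nondecreasing_is_cvgn (ndf t Dt).
have mlim : measurable_fun D (fun t => limn (f^~ t)) := emeasurable_fun_cvg _ _ mf cvf.
apply: le_trans (ge0_le_integral mu mD h0 mh mlim _) _.
  move=> t Dt; have [n hn] := hf t Dt; apply: le_trans hn _.
  by apply: lime_ge; [exact: cvf|exists n => // m; exact: ndf].
rewrite (monotone_convergence mu mD mf f0 ndf); apply: lime_le; last exact: nearW.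
apply: ereal_nondecreasing_is_cvgn => m n mn.
by apply: ge0_le_integral => // t Dt; [exact: f0|exact: ndf].
Qed.

Lemma semifinite_ge0_integral_le (h : T -> R) (K : R) : mu_semifinite mu ->
  measurable_fun setT h -> (forall t, (0 <= h t)%R) ->
  (forall A, measurable A -> mu A < +oo -> \int[mu]_(t in A) (h t)%:E <= K%:E) ->
  \int[mu]_(t in setT) (h t)%:E <= K%:E.
Proof.
move=> hsf mh h0 hK.
pose B n := h @^-1` `[(n.+1%:R^-1)%R, +oo[.
have mB n : measurable (B n) by rewrite -[B n]setTI; exact: mh.
have inB n t : B n t <-> (n.+1%:R^-1 <= h t)%R by rewrite /B /= in_itv /= andbT.
have mhE : measurable_fun setT (fun t => (h t)%:E) by exact/measurable_EFinP.
have Bfin n : mu (B n) < +oo.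
  rewrite ltNge leye_eq; apply/negP => /eqP Boo.
  have [A [mA AB Afin Abig]] :=
    semifinite_measure_unbounded hsf (mB n) Boo (n.+1%:R * K)%R.
  have : (n.+1%:R^-1)%R%:E * mu A <= K%:E.
    apply: le_trans (hK A mA Afin); rewrite -integral_cst //.
    apply: ge0_le_integral => //; first by move=> t _; rewrite lee_fin invr_ge0.
      exact: measurable_funTS.
    by move=> t /AB /inB; rewrite lee_fin.
  have Afin_num : mu A \is a fin_num by rewrite ge0_fin_numE.
  move: Abig; rewrite -(fineK Afin_num) -EFinM lte_fin lee_fin mulrC => Abig.
  by rewrite mulrC ler_pdivrMr // => /(lt_le_trans Abig); rewrite ltxx.
pose f n := (fun t => (h t)%:E) \_ (B n).
apply: (@ge0_integral_le_nondecreasing_bound _ _ f) => //.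
- by move=> t _; rewrite lee_fin.
- by move=> n; apply/(measurable_restrictT _ (mB n)); exact: measurable_funTS.
- by move=> n t _; rewrite /f patchE; case: ifP => // _; rewrite lee_fin.
- move=> t _ n m nm; rewrite /f !patchE.
  have BnBm : B n `<=` B m.
    move=> u /inB hu; apply/inB; apply: le_trans hu.
    by rewrite lef_pV2 ?posrE ?ltr0n // ler_nat.
  case: ifPn => [/set_mem/BnBm Bm|_]; first by rewrite mem_set.
  by case: ifP => _; rewrite lee_fin.
- move=> t _; have [ht0|ht0] := eqVneq (h t) 0%R.
    by exists 0%N; rewrite /f patchE ht0; case: ifP.
  have ht_gt0 : (0 < h t)%R by rewrite lt_neqAle eq_sym ht0 h0.
  have [k hk] := ltr_add_invr ht_gt0; rewrite add0r in hk.
  by exists k; rewrite /f patchE mem_set //; apply/inB; exact: ltW.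
- by move=> n; rewrite /f -integral_mkcond; exact: hK.
Qed.
End exhaustion_semifinite.

Section sup_oppr_closed.
Variable R : realType.
Implicit Types S : set R.

Lemma sup_ge0_oppr_closed S : (forall r, S r -> S (- r)) -> 0 <= sup S.
Proof.
move=> SN; have [->|/set0P[r Sr]] := eqVneq S set0; first by rewrite sup0.
have [Sub|Snub] := pselect (has_ubound S); last by rewrite sup_out // => -[].
have := ub_le_sup Sub Sr; have := ub_le_sup Sub (SN _ Sr); lra.
Qed.

Lemma le_sup_oppr_closed S S' : S `<=` S' -> (forall r, S' r -> S' (- r)) ->
  has_ubound S' -> sup S <= sup S'.
Proof.
move=> SS' S'N S'ub; have [->|/set0P S0] := eqVneq S set0.
  by rewrite sup0; exact: sup_ge0_oppr_closed.
by apply: ge_sup => // y Sy; apply: ub_le_sup => //; exact: SS'.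
Qed.

Lemma sup_le_ge0_ub S c : 0 <= c -> (forall r, S r -> r <= c) -> sup S <= c.
Proof.
move=> c0 Sc; have [->|/set0P S0] := eqVneq S set0; first by rewrite sup0.
exact: ge_sup.
Qed.

End sup_oppr_closed.

Section fspace_duality.
Context {d : measure_display} {T : measurableType d} {R : realType}.
Variable mu : {measure set T -> \bar R}.
Implicit Types E G H : @fspace d T R.

Definition neg_invariant E := forall x, fmem E x ->
  fmem E (fun t => -1 * x t) /\ fnorm E (fun t => -1 * x t) = fnorm E x.

Definition isometric_sub G H := forall x, fmem G x -> fmem H x /\ fnorm H x = fnorm G x.

Lemma neg_invariant_BIS E : is_BIS mu E -> neg_invariant E.
Proof.
case=> _ _ [[_ _ Escale] [_ Enorm_scale _] _ _] x Ex; split; first exact: Escale.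
by rewrite Enorm_scale // normrN1 mul1r.
Qed.

Lemma neg_invariant_ocpart E : neg_invariant E -> neg_invariant (ocpart mu E).
Proof.
move=> EN x [Ex ocx]; have [ENx nNx] := EN x Ex; split => //; split => //.
have absN : (fun t => `|-1 * x t|) = (fun t => `|x t|).
  by apply/funext => t; rewrite mulN1r normrN.
by move=> I le xs *; apply: (ocx I le xs) => // i; rewrite -absN.
Qed.

Lemma Rintegral_mulN1 (f x : T -> R) :
  mu.-integrable setT (fun t => (f t * x t)%:E) ->
  Rintegral mu setT (fun t => (-1 * f t) * x t) = - Rintegral mu setT (fun t => f t * x t).
Proof.
move=> fx; rewrite -[RHS]mulN1r -RintegralZl //.
by apply: eq_Rintegral => t _; rewrite mulrA.
Qed.

Lemma dual_vals_oppr_closed E f : neg_invariant E ->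
  (forall x, fmem E x -> mu.-integrable setT (fun t => (f t * x t)%:E)) ->
  forall r, dual_vals mu E f r -> dual_vals mu E f (- r).
Proof.
move=> EN fE _ [x [Ex nx ->]]; have [ENx nNx] := EN x Ex.
exists (fun t => -1 * x t); split => //; first by rewrite nNx.
rewrite -Rintegral_mulN1; last exact: fE.
by apply: eq_Rintegral => t _; rewrite mulrCA mulrA.
Qed.

Lemma neg_invariant_dual E : neg_invariant E -> neg_invariant (dual mu E).
Proof.
move=> EN g [Lg gE gub].
have vals_gN r : dual_vals mu E (fun t => -1 * g t) r <-> dual_vals mu E g (- r).
  split => -[x [Ex nx rE]]; exists x; split => //.
    by rewrite rE Rintegral_mulN1 ?opprK //; exact: gE.
  by rewrite Rintegral_mulN1 -?rE ?opprK //; exact: gE.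
have valsN : dual_vals mu E (fun t => -1 * g t) = dual_vals mu E g.
  apply/seteqP; split => r.
    by move/vals_gN/(dual_vals_oppr_closed EN gE); rewrite opprK.
  by move=> h; apply/vals_gN; exact: dual_vals_oppr_closed.
split; last by rewrite /= valsN.
split; last by rewrite valsN.
- by apply: measurable_funM => //; exact: measurable_cst.
- move=> x Ex; under eq_fun do rewrite -mulrA EFinM.
  exact: integrableZl (gE x Ex).
Qed.

Lemma sub1_refl G : sub1 G G.
Proof. by move=> x Gx; split. Qed.

Lemma ocpart_isometric_sub E : isometric_sub (ocpart mu E) E.
Proof. by move=> x []. Qed.

Lemma dual_vals_isometric_sub G H f : isometric_sub G H ->
  dual_vals mu G f `<=` dual_vals mu H f.
Proof. by move=> GH _ [x [Gx nx ->]]; have [Hx nHx] := GH x Gx; exists x; rewrite nHx. Qed.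

Lemma sub1_dual_isometric_sub G H : neg_invariant H -> isometric_sub G H ->
  sub1 (dual mu H) (dual mu G).
Proof.
move=> HN GH f [Lf fH fub].
have vals_sub : dual_vals mu G f `<=` dual_vals mu H f by exact: dual_vals_isometric_sub.
split; first split => //.
- by move=> x /GH[Hx _]; exact: fH.
- by case: fub => M hM; exists M => r /vals_sub; exact: hM.
by apply: le_sup_oppr_closed => //; exact: dual_vals_oppr_closed.
Qed.

Lemma sub1_isometric_sub G H : sub1 G H -> sub1 H G -> isometric_sub G H.
Proof.
move=> GH HG x Gx; have [Hx nHx] := GH x Gx.
by split => //; apply/le_anti; rewrite nHx (HG x Hx).2.
Qed.

Lemma dual_eq_of_sub1 G H : sub1 G H -> sub1 H G -> dual mu G = dual mu H.
Proof.
move=> GH HG; have memGH : fmem G = fmem H.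
  by apply/funext => x; apply/propext; split => [/GH|/HG] [].
have valsGH : dual_vals mu G = dual_vals mu H.
  apply/funext => f; apply/seteqP.
  by split; apply: dual_vals_isometric_sub; exact: sub1_isometric_sub.
by rewrite /dual memGH valsGH.
Qed.

Lemma ocpart_sub1 G H : sub1 G H -> sub1 H G -> sub1 (ocpart mu G) (ocpart mu H).
Proof.
move=> GH HG x [Gx ocx]; have [Hx nHx] := sub1_isometric_sub GH HG Gx.
split; last by rewrite /= nHx.
split => // I le xs i0 rf tr dir Hxs dom dec pos inf e e0.
have [j hj] := ocx I le xs i0 rf tr dir (fun i => (HG _ (Hxs i)).1) dom dec pos inf e e0.
exists j => i ji; rewrite -(sub1_isometric_sub HG GH (Hxs i)).2; exact: hj.
Qed.

End fspace_duality.

Lemma L0_abs {d : measure_display} {T : measurableType d} {R : realType} (x : T -> R) :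
  L0 x -> L0 (fun t => `|x t|).
Proof. by move=> mx; apply: measurableT_comp => //; exact: normr_measurable. Qed.

Section ocpart_BIS.
Context {d : measure_display} {T : measurableType d} {R : realType}.
Variable mu : {measure set T -> \bar R}.
Variable E : @fspace d T R.
Hypothesis hE : is_BIS mu E.
Hypothesis hF : foundation mu (ocpart mu E) E.
Local Notation F := (ocpart mu E).
Local Notation "x <=ae y" := (ae_le mu x y) (at level 70).

Lemma memE_L0 x : fmem E x -> L0 x.
Proof. by case: hE => h _ _; exact: h. Qed.

Lemma memE0 : fmem E (fun=> 0).
Proof. by case: hE => _ _ [[]]. Qed.

Lemma memE_add x y : fmem E x -> fmem E y -> fmem E (fun t => x t + y t).
Proof. by case: hE => _ _ [[_ Eadd _] _ _ _]; exact: Eadd. Qed.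

Lemma normE_triangle x y : fmem E x -> fmem E y ->
  fnorm E (fun t => x t + y t) <= fnorm E x + fnorm E y.
Proof. by case: hE => _ _ [_ [Etri _ _] _ _]; exact: Etri. Qed.

Lemma normE_scale a x : fmem E x -> fnorm E (fun t => a * x t) = `|a| * fnorm E x.
Proof. by case: hE => _ _ [_ [_ Escale _] _ _]; exact: Escale. Qed.

Lemma normE_eq0 x : fmem E x -> fnorm E x = 0 -> Defs.ae_eq0 mu x.
Proof. by case: hE => _ _ [_ [_ _ Eeq0] _ _]; exact: Eeq0. Qed.

Lemma memE_ideal x y : fmem E y -> L0 x ->
  (fun t => `|x t|) <=ae (fun t => `|y t|) -> fmem E x.
Proof. by case: hE => _ _ [_ _ _ hid] Ey Lx /(hid _ _ Ey Lx) []. Qed.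

Lemma normE_ideal x y : fmem E y -> L0 x ->
  (fun t => `|x t|) <=ae (fun t => `|y t|) -> fnorm E x <= fnorm E y.
Proof. by case: hE => _ _ [_ _ _ hid] Ey Lx /(hid _ _ Ey Lx) []. Qed.

Lemma normE0 : fnorm E (fun=> 0) = 0.
Proof. by have := normE_scale 0 memE0; rewrite normr0 !mul0r. Qed.

Lemma normE_ge0 x : fmem E x -> 0 <= fnorm E x.
Proof.
case: hE => _ _ [[_ _ Escale] _ _ _] Ex.
have := normE_triangle Ex (Escale (-1) _ Ex); rewrite normE_scale // normrN1 mul1r.
have -> : (fun t => x t + -1 * x t) = (fun=> 0) by apply/funext => t; lra.
rewrite normE0; lra.
Qed.

Lemma memF_ideal x y : fmem F x -> L0 y ->
  (fun t => `|y t|) <=ae (fun t => `|x t|) -> fmem F y.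
Proof.
case: hF => _ Fideal _ Fx Ly yx; apply: (Fideal _ _ Fx) => //.
exact: memE_ideal Fx.1 Ly yx.
Qed.

Lemma memF_abs x : fmem F x -> fmem F (fun t => `|x t|).
Proof.
move=> Fx; apply: (memF_ideal Fx); first exact/L0_abs/memE_L0/Fx.1.
by apply: aeW => t /=; rewrite normr_id.
Qed.

Lemma memF0 : fmem F (fun=> 0).
Proof.
split; first exact: memE0.
move=> I le xs [i] _ _ _ Exs dom _ pos _ e e0; exists i => j _.
apply: le_lt_trans e0; rewrite -normE0; apply: (normE_ideal memE0 (memE_L0 (Exs j))).
apply: filterS2 (dom j) (pos j) => t /= xs_le xs_ge0.
by rewrite normr0 in xs_le *; rewrite ger0_norm.
Qed.

Definition ae_decreasing_to0 (I : Type) (le : I -> I -> Prop) (xs : I -> T -> R) :=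
  [/\ forall i j, le i j -> xs j <=ae xs i,
      forall i, (fun=> 0) <=ae xs i &
      forall z, L0 z -> (forall i, z <=ae xs i) -> z <=ae (fun=> 0)].

Lemma ae_decreasing_to0_min I le (xs : I -> T -> R) (a : T -> R) :
  (forall t, 0 <= a t) -> ae_decreasing_to0 le xs ->
  ae_decreasing_to0 le (fun i t => Num.min (xs i t) (a t)).
Proof.
move=> a0 [dec pos inf]; split.
- move=> i j ij; apply: filterS (dec i j ij) => t /=.
  by case: (leP (xs i t) (a t)); case: (leP (xs j t) (a t)) => *; lra.
- move=> i; apply: filterS (pos i) => t /=.
  by have := a0 t; case: (leP (xs i t) (a t)) => *; lra.
- move=> z Lz zmin; apply: inf => // i; apply: filterS (zmin i) => t /=.
  by case: (leP (xs i t) (a t)) => *; lra.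
Qed.

Lemma ae_decreasing_to0_excess I le (xs : I -> T -> R) (a : T -> R) :
  (forall t, 0 <= a t) -> ae_decreasing_to0 le xs ->
  ae_decreasing_to0 le (fun i t => Num.max (xs i t - a t) 0).
Proof.
move=> a0 [dec pos inf]; split.
- move=> i j ij; apply: filterS (dec i j ij) => t /=.
  by case: (leP (xs i t - a t) 0); case: (leP (xs j t - a t) 0) => *; lra.
- by move=> i; apply: aeW => t /=; case: (leP (xs i t - a t) 0) => *; lra.
- move=> z Lz zex; apply: inf => // i; apply: filterS2 (zex i) (pos i) => t /=.
  by have := a0 t; case: (leP (xs i t - a t) 0) => *; lra.
Qed.

Lemma memF_add x1 x2 : fmem F x1 -> fmem F x2 -> fmem F (fun t => x1 t + x2 t).
Proof.
move=> [E1 oc1] [E2 oc2]; split; first exact: memE_add.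
move=> I le xs i0 rf tr dir Exs dom dec pos inf e e0.
have x1_ge0 t : 0 <= `|x1 t| := normr_ge0 _.
(* Split the net below |x1| + |x2| into a net below |x1| and one below |x2|. *)
pose us i t := Num.min (xs i t) `|x1 t|.
pose vs i t := Num.max (xs i t - `|x1 t|) 0.
have xs_split i : xs i = fun t => us i t + vs i t.
  apply/funext => t; rewrite /us /vs.
  by case: (leP (xs i t) `|x1 t|); case: (leP (xs i t - `|x1 t|) 0) => *; lra.
have Lxs i := memE_L0 (Exs i).
have Lx1 := L0_abs (memE_L0 E1).
have Eus i : fmem E (us i).
  apply: (memE_ideal (Exs i) (measurable_minr (Lxs i) Lx1)).
  apply: filterS (pos i) => t /= xs_ge0; rewrite /us.
  by case: (leP (xs i t) `|x1 t|) => ?; rewrite ?normr_id (ger0_norm xs_ge0) //; lra.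
have Evs i : fmem E (vs i).
  apply: (memE_ideal (Exs i)).
    exact: measurable_maxr (measurable_funB (Lxs i) Lx1) (measurable_cst _).
  apply: filterS (pos i) => t /= xs_ge0; rewrite /vs (ger0_norm xs_ge0).
  case: (leP (xs i t - `|x1 t|) 0) => [_|vs_gt0]; first by rewrite normr0.
  by rewrite (gtr0_norm vs_gt0); have := x1_ge0 t; lra.
have [us_dec us_pos us_inf] := ae_decreasing_to0_min x1_ge0 (And3 dec pos inf).
have [vs_dec vs_pos vs_inf] := ae_decreasing_to0_excess x1_ge0 (And3 dec pos inf).
have [j1 hj1] : exists j1, forall i, le j1 i -> fnorm E (us i) < e / 2.
  apply: (oc1 I le us i0 rf tr dir Eus) => //; rewrite ?divr_gt0 // => i.
  by apply: aeW => t /=; rewrite /us; case: (leP (xs i t) `|x1 t|) => *; lra.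
have [j2 hj2] : exists j2, forall i, le j2 i -> fnorm E (vs i) < e / 2.
  apply: (oc2 I le vs i0 rf tr dir Evs) => //; rewrite ?divr_gt0 // => i.
  apply: filterS (dom i) => t /=; rewrite /vs.
  have := ler_normD (x1 t) (x2 t); have := normr_ge0 (x2 t).
  by case: (leP (xs i t - `|x1 t|) 0) => *; lra.
have [k [j1k j2k]] := dir j1 j2.
exists k => i ki; rewrite xs_split; apply: le_lt_trans (normE_triangle (Eus i) (Evs i)) _.
by have := hj1 i (tr _ _ _ j1k ki); have := hj2 i (tr _ _ _ j2k ki); lra.
Qed.

Lemma memF_natmul n x : fmem F x -> fmem F (fun t => n%:R * x t).
Proof.
move=> Fx; elim: n => [|n ih].
  by under eq_fun do rewrite mul0r; exact: memF0.
under eq_fun do rewrite -addn1 natrD mulrDl mul1r.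
exact: memF_add.
Qed.

Lemma memF_scale a x : fmem F x -> fmem F (fun t => a * x t).
Proof.
move=> Fx; apply: (memF_ideal (memF_natmul (Num.bound `|a|) Fx)).
  by apply: measurable_funM => //; exact/memE_L0/Fx.1.
apply: aeW => t /=; rewrite !normrM (@ger0_norm _ (_%:R)) //.
by apply: ler_wpM2r => //; exact/ltW/archi_boundP.
Qed.

Lemma memF_sum_abs (y : nat -> T -> R) n : (forall k, fmem F (y k)) ->
  fmem F (fun t => \sum_(0 <= k < n) `|y k t|).
Proof.
move=> Fy; elim: n => [|n ih].
  by under eq_fun do rewrite big_geq //; exact: memF0.
under eq_fun do rewrite big_nat_recr //=.
by apply: memF_add => //; exact: memF_abs.
Qed.

Local Notation supp y := (y @^-1` [set~ 0%R]).

Lemma measurable_supp (y : T -> R) : L0 y -> measurable (supp y).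
Proof. by move=> Ly; rewrite -[supp y]setTI; apply: Ly => //; exact/measurableC. Qed.

Lemma supp_add_abs (y z : T -> R) :
  supp (fun t => `|y t| + `|z t|) = supp y `|` supp z.
Proof.
apply/seteqP; split => t /=.
  move/eqP; rewrite paddr_eq0 // !normr_eq0 negb_and.
  by case/orP => /eqP; [left|right].
by move=> yz /eqP; rewrite paddr_eq0 // !normr_eq0 => /andP[/eqP y0 /eqP z0]; case: yz.
Qed.

Lemma supports_exhaust_finite_measure B : measurable B -> (mu B < +oo)%E ->
  exists y : nat -> T -> R,
    (forall n, fmem F (y n)) /\ mu (B `\` \bigcup_n supp (y n)) = 0%E.
Proof.
move=> mB Bfin; pose S := [set B `&` supp y | y in fmem F].
have mS A : S A -> measurable A.
  by move=> [y Fy <-]; apply: measurableI mB (measurable_supp (memE_L0 Fy.1)).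
have [|||U [SU _ nullU]] := @measure_exhaustion _ _ _ mu S (fine (mu B)) mS.
- exists (fun=> 0); first exact: memF0.
  by apply/seteqP; split => // t [_ /=].
- move=> _ _ [y1 Fy1 <-] [y2 Fy2 <-]; exists (fun t => `|y1 t| + `|y2 t|).
    by apply: memF_add; exact: memF_abs.
  by rewrite supp_add_abs setIUr.
- move=> _ [y Fy <-]; rewrite fineK ?ge0_fin_numE //.
  by apply: le_measure; rewrite ?inE //; apply: mS; exists y.
have Uy n : exists y, fmem F y /\ B `&` supp y = U n.
  by have [y Fy Uy] := SU n; exists y.
have [y yU] := choice Uy.
exists y; split => [n|]; first exact: (yU n).1.
set N := B `\` _.
have mN : measurable N.
  by apply: measurableD mB (bigcup_measurable _) => n _; exact/measurable_supp/memE_L0/(yU n).1.1.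
have Nw w : fmem F w -> N `&` supp w `<=` (B `&` supp w) `\` \bigcup_n U n.
  move=> Fw t [[Bt ny] wt]; split => // -[n _].
  by rewrite -(yU n).2 => -[_ ynt]; apply: ny; exists n.
have : Defs.ae_eq0 mu (\1_N : T -> R).
  case: hF => _ _; apply; first exact: measurable_indic.
  move=> w Fw; exists ((B `&` supp w) `\` \bigcup_n U n); split.
  - apply: measurableD; first by apply: mS; exists w.
    by apply: bigcup_measurable => n _; apply: mS.
  - by apply: nullU; exists w.
  - apply: subset_trans (Nw w Fw) => t /=; rewrite indicE.
    case: (boolP (t \in N)) => [/set_mem Nt|_] Nwt; last by rewrite mul0r in Nwt.
    by split => // wt; apply: Nwt; rewrite wt mulr0.
case=> M [mM M0 NM]; apply/eqP; rewrite eq_le measure_ge0 andbT -M0.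
apply: le_measure; rewrite ?inE // => t Nt; apply: NM => /=.
by rewrite indicE mem_set // => /eqP; rewrite oner_eq0.
Qed.

Lemma memF_approx_abs x (y : nat -> T -> R) : fmem E x -> (forall n, fmem F (y n)) ->
  exists w : nat -> T -> R, [/\ forall n, fmem F (w n),
    forall n t, 0 <= w n t <= `|x t|, forall t, nondecreasing_seq (w^~ t) &
    forall t, (\bigcup_n supp (y n)) t -> exists n, w n t = `|x t|].
Proof.
move=> Ex Fy; pose S n t := \sum_(0 <= k < n) `|y k t|.
have S_nd t : nondecreasing_seq (S^~ t) by apply: nondecreasing_series => *.
have S_ge m n t : (m < n)%N -> `|y m t| <= S n t.
  move=> mn; apply: le_trans (S_nd t _ _ mn); rewrite /S big_nat_recr //=.
  by rewrite lerDr sumr_ge0.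
pose V n t := n%:R * S n t.
have V_ge0 n t : 0 <= V n t by rewrite mulr_ge0 ?sumr_ge0.
have FV n : fmem F (V n) by apply/memF_natmul/memF_sum_abs.
exists (fun n t => Num.min `|x t| (V n t)); split.
- move=> n; apply: (memF_ideal (FV n)).
    exact: measurable_minr (L0_abs (memE_L0 Ex)) (memE_L0 (FV n).1).
  apply: aeW => t /=; rewrite (ger0_norm (V_ge0 n t)).
  by case: (leP `|x t| (V n t)) => ?; rewrite ?normr_id ?(ger0_norm (V_ge0 n t)).
- move=> n t; have := V_ge0 n t; have := normr_ge0 (x t).
  by case: (leP `|x t| (V n t)) => *; apply/andP; split; lra.
- move=> t m n mn; apply: le_min2 => //; apply: ler_pM; rewrite ?sumr_ge0 ?ler_nat //.
  exact: S_nd.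
- move=> t [m _ ymt]; have ym_gt0 : 0 < `|y m t| by rewrite normr_gt0; exact/eqP.
  pose n := maxn m.+1 (Num.bound (`|x t| / `|y m t|)).
  exists n; apply/min_idPl; apply: (@le_trans _ _ (n%:R * `|y m t|)).
    rewrite -ler_pdivrMr //; apply: le_trans (ltW (archi_boundP _)) _.
      by rewrite divr_ge0.
    by rewrite ler_nat leq_maxr.
  by rewrite ler_wpM2l //; exact: S_ge (leq_maxl _ _).
Qed.

Section dual_ocpart.
Variable g : T -> R.
Hypothesis hg : fmem (dual mu F) g.
Local Notation C := (fnorm (dual mu F) g).

Let Lg : L0 g. Proof. by case: hg. Qed.
Let g_ub : has_ubound (dual_vals mu F g). Proof. by case: hg. Qed.
Let gF x : fmem F x -> mu.-integrable setT (fun t => (g t * x t)%:E).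
Proof. by case: hg => _ h _; exact: h. Qed.

Lemma dual_norm_ge0 : 0 <= C.
Proof.
apply/sup_ge0_oppr_closed/(dual_vals_oppr_closed _ gF).
exact: neg_invariant_ocpart (neg_invariant_BIS hE).
Qed.

Lemma Rintegral_le_dual_norm w : fmem F w ->
  Rintegral mu setT (fun t => g t * w t) <= C * fnorm E w.
Proof.
move=> Fw; have [w0|wn0] := eqVneq (fnorm E w) 0.
  rewrite w0 mulr0 /Rintegral (ae_eq_integral (cst 0%E)) ?integral0 //.
  - by apply/measurable_EFinP; apply: measurable_funM => //; exact: memE_L0 Fw.1.
  - by apply: filterS (normE_eq0 Fw.1 w0) => t /= -> _; rewrite mulr0.
have w_gt0 : 0 < fnorm E w by rewrite lt_neqAle eq_sym wn0 normE_ge0 //; exact: Fw.1.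
pose v t := (fnorm E w)^-1 * w t.
have gv : dual_vals mu F g (Rintegral mu setT (fun t => g t * v t)).
  exists v; split; first exact: memF_scale.
    by rewrite normE_scale ?ger0_norm ?invr_ge0 ?mulVf //; [exact: ltW|exact: Fw.1].
  by [].
have := ub_le_sup g_ub gv.
have -> : Rintegral mu setT (fun t => g t * v t) =
    (fnorm E w)^-1 * Rintegral mu setT (fun t => g t * w t).
  by rewrite -RintegralZl //; [apply: eq_Rintegral => t _; rewrite mulrCA|exact: gF].
by rewrite ler_pdivrMl // mulrC.
Qed.

Lemma integral_abs_le_dual_norm w : fmem F w ->
  (\int[mu]_(t in setT) (`|g t * w t|)%:E <= (C * fnorm E w)%:E)%E.
Proof.
move=> Fw; pose w' t := if 0 <= g t then `|w t| else - `|w t|.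
have Lw : L0 w := memE_L0 Fw.1.
have Lw' : L0 w'.
  apply: measurable_fun_ifT; [|exact: L0_abs|exact/measurable_funN/L0_abs].
  exact: measurable_fun_ler (measurable_cst _) Lg.
have w'w : ae_le mu (fun t => `|w' t|) (fun t => `|w t|).
  by apply: aeW => t /=; rewrite /w'; case: ifP => _; rewrite ?normrN normr_id.
have Fw' : fmem F w' := memF_ideal Fw Lw' w'w.
have -> : (fun t => (`|g t * w t|)%:E) = (fun t => (g t * w' t)%:E).
  apply/funext => t; rewrite /w' normrM; case: ifPn => [g0|].
    by rewrite ger0_norm.
  by rewrite -ltNge => g0; rewrite ltr0_norm // mulrN mulNr.
rewrite -(fineK (integrable_fin_num measurableT (gF Fw'))) lee_fin.
apply: le_trans (Rintegral_le_dual_norm Fw') _.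
by rewrite ler_wpM2l ?dual_norm_ge0 //; exact: normE_ideal Fw.1 Lw' w'w.
Qed.

Lemma integral_le_dual_norm_finite x B : fmem E x -> measurable B -> (mu B < +oo)%E ->
  (\int[mu]_(t in B) (`|g t| * `|x t|)%:E <= (C * fnorm E x)%:E)%E.
Proof.
move=> Ex mB Bfin; have [y [Fy null]] := supports_exhaust_finite_measure mB Bfin.
have [w [Fw w_bnd w_nd w_eq]] := memF_approx_abs Ex Fy.
have w_ge0 n t : 0 <= w n t by have /andP[] := w_bnd n t.
set U := \bigcup_n supp (y n).
have mU : measurable U.
  by apply: bigcup_measurable => n _; exact/measurable_supp/memE_L0/(Fy n).1.
have mf n : measurable_fun setT (fun t => (`|g t| * w n t)%:E).
  by apply/measurable_EFinP; apply: measurable_funM; [exact: L0_abs|exact/memE_L0/(Fw n).1].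
have hx : measurable_fun setT (fun t => (`|g t| * `|x t|)%:E).
  by apply/measurable_EFinP; apply: measurable_funM; apply: L0_abs => //; exact: memE_L0.
rewrite (ge0_negligible_integral (measurableD mB mU) mB) //; last exact: measurable_funTS.
rewrite setDD; apply: (@ge0_integral_le_nondecreasing_bound _ _ _ _ _ _
  (fun n t => (`|g t| * w n t)%:E)).
- exact: measurableI.
- exact: measurable_funTS.
- by move=> t _; rewrite lee_fin mulr_ge0.
- by move=> n; exact: measurable_funTS.
- by move=> n t _; rewrite lee_fin mulr_ge0.
- by move=> t _ m n mn; rewrite lee_fin ler_wpM2l //; exact: w_nd.
- by move=> t [_ /w_eq[n wn]]; exists n; rewrite wn.
- move=> n; apply: le_trans
    (ge0_subset_integral mu (measurableI _ _ mB mU) measurableT (mf n) _ (subsetT _)) _.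
    by move=> t _; rewrite lee_fin mulr_ge0.
  under eq_integral do rewrite -(ger0_norm (w_ge0 n _)) -normrM.
  apply: le_trans (integral_abs_le_dual_norm (Fw n)) _.
  rewrite lee_fin ler_wpM2l ?dual_norm_ge0 //; apply: normE_ideal Ex (memE_L0 (Fw n).1) _.
  by apply: aeW => t /=; rewrite (ger0_norm (w_ge0 n t)); have /andP[] := w_bnd n t.
Qed.

End dual_ocpart.

Lemma integral_le_dual_norm g x : mu_semifinite mu -> fmem (dual mu F) g -> fmem E x ->
  (\int[mu]_(t in setT) (`|g t| * `|x t|)%:E <= (fnorm (dual mu F) g * fnorm E x)%:E)%E.
Proof.
move=> hsf hg Ex; apply: semifinite_ge0_integral_le => //.
- by apply: measurable_funM; apply: L0_abs; [case: hg|exact: memE_L0].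
- by move=> A mA Afin /=; exact: integral_le_dual_norm_finite.
Qed.

Lemma sub1_dual_ocpart : mu_semifinite mu -> sub1 (dual mu F) (dual mu E).
Proof.
move=> hsf g hg; have [Lg _ _] := hg.
have gx_abs x : fmem E x -> (fun t => (`|g t * x t|)%:E) = (fun t => (`|g t| * `|x t|)%:E).
  by move=> _; apply/funext => t; rewrite normrM.
have gE x : fmem E x -> mu.-integrable setT (fun t => (g t * x t)%:E).
  move=> Ex; apply/integrableP; split.
    by apply/measurable_EFinP; apply: measurable_funM => //; exact: memE_L0.
  by rewrite gx_abs //; apply: le_lt_trans (integral_le_dual_norm hsf hg Ex) (ltry _).
have vals_le r : dual_vals mu E g r -> r <= fnorm (dual mu F) g.
  move=> [x [Ex nx ->]]; apply: le_trans (ler_norm _) _.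
  apply: le_trans (le_normr_Rintegral measurableT (gE x Ex)) _.
  have gx_fin := integrable_fin_num measurableT (integrable_norm (gE x Ex)).
  rewrite /Rintegral -lee_fin fineK // gx_abs // -[fnorm (dual mu F) g]mulr1 -nx.
  exact: integral_le_dual_norm.
split; first by split => //; exists (fnorm (dual mu F) g).
exact: sup_le_ge0_ub (dual_norm_ge0 hg) vals_le.
Qed.

End ocpart_BIS.

Theorem theorem7 (d : measure_display) (T : measurableType d) (R : realType)
  (mu : {measure set T -> \bar R}) (E : @fspace d T R) :
  admissible mu -> in_J0 mu E ->
  [/\ sub1 (dual mu (dual mu (ocpart mu E))) (dual mu (dual mu E)),
      sub1 (dual mu (dual mu E)) (dual mu (ocpart mu (dual mu E))),
      sub1 (dual mu (ocpart mu (dual mu (ocpart mu E)))) (dual mu (ocpart mu (dual mu E))) &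
      sub1 (dual mu (dual mu (ocpart mu E))) (dual mu (ocpart mu (dual mu (ocpart mu E))))].
Proof.
case=> _ _ hsf _ [hE hF _].
have EN := neg_invariant_BIS hE.
have FE := sub1_dual_ocpart hE hF hsf.
have EF : sub1 (dual mu E) (dual mu (ocpart mu E)).
  exact: sub1_dual_isometric_sub EN (@ocpart_isometric_sub _ _ _ mu E).
split.
- by rewrite (dual_eq_of_sub1 mu FE EF); exact: sub1_refl.
- apply: sub1_dual_isometric_sub; [exact: neg_invariant_dual|exact: ocpart_isometric_sub].
- by rewrite (dual_eq_of_sub1 mu (ocpart_sub1 FE EF) (ocpart_sub1 EF FE)); exact: sub1_refl.
- apply: sub1_dual_isometric_sub; last exact: ocpart_isometric_sub.
  exact/neg_invariant_dual/neg_invariant_ocpart.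
Qed.
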